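(* Let $p$ be a prime, $k \geq 3$ an integer, $N = p^{2k}$, and let $d$ be odd. In the coefficient-choosing game of degree $d$ over $\mathbb{Z}/N\mathbb{Z}$, Wanda has a winning strategy (whether she moves first or second).
   Context: The coefficient-choosing game of degree $d$ over $R = \mathbb{Z}/N\mathbb{Z}$: Nora and Wanda alternately choose coefficients of $f(x) = a_d x^d + \cdots + a_0$; on each move the current player picks a not-yet-chosen coefficient and assigns it a value in $R$, subject to $a_d \neq 0$, $a_0 \neq 0$. After all $d+1$ coefficients are chosen, Wanda wins if $f$ has a root in $R$, and Nora wins otherwise. *)

From HB Require Import structures.
From mathcomp Require Import all_boot all_order all_algebra.
Set Implicit Arguments. Unset Strict Implicit. Unset Printing Implicit Defensive.
Import GRing.Theory.
Local Open Scope ring_scope.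

(* A position of the coefficient-choosing game of degree d over Z/NZ:
   s i = Some a  means coefficient a_i has been chosen with value a,
   s i = None    means a_i is not yet chosen.  (Requires 1 < N.) *)
Definition position (N d : nat) := {ffun 'I_d.+1 -> option 'Z_N}.

Definition empty_pos (N d : nat) : position N d := [ffun _ => None].

Definition legal_move (N d : nat) (s : position N d) (i : 'I_d.+1) (v : 'Z_N) : Prop :=
  s i = None /\ ((nat_of_ord i == 0)%N || (nat_of_ord i == d) -> v != 0).

Definition play (N d : nat) (s : position N d) (i : 'I_d.+1) (v : 'Z_N) : position N d :=
  [ffun j => if j == i then Some v else s j].

Definition pos_poly (N d : nat) (s : position N d) : {poly 'Z_N} :=
  \poly_(i < d.+1) odflt 0 (s (inord i)).

Fixpoint wwins (N d : nat) (n : nat) (wturn : bool) (s : position N d) : Prop :=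
  match n with
  | 0%N => exists x : 'Z_N, root (pos_poly s) x
  | n'.+1 =>
      if wturn then exists i v, legal_move s i v /\ wwins n' false (play s i v)
      else forall i v, legal_move s i v -> wwins n' true (play s i v)
  end.

Definition wanda_wins (N d : nat) (wanda_first : bool) : Prop :=
  wwins d.+1 wanda_first (empty_pos N d).

From mathcomp Require Import all_boot all_order all_algebra zify ring.
Set Implicit Arguments. Unset Strict Implicit. Unset Printing Implicit Defensive.
Import GRing.Theory.
Local Open Scope ring_scope.

(* When Nora moves first, d + 1 is even and Wanda makes the last move.  She
   uses her moves to fill a_0 and a_d while either is still open; for d >= 5
   both are closed before her last move, which then makes f(1) = 0.  For d = 3,
   if Nora avoids both ends, Wanda sets a_3 = 1; if a_0 is then left to her,
   she takes a_0 = -g(x) for an x with g(x) = a_1 x + a_2 x^2 + x^3 nonzero,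
   which exists because g(2) - 3 g(1) - g(-1) = 6 is nonzero mod p^(2k).
   When Wanda moves first (d >= 3) she opens with a_0 = P = p^(2k-2), so that
   P^2 = 0.  If Nora does not take a_1, Wanda sets a_1 = 1 and -P is a root.
   If Nora sets a_1 = c, Wanda sets a_2 = -1 - q with q = c div p^(k-1).  If
   p^(k-1) divides c, then x = p^(k-1) is a root, since x^3 = 0 (as k >= 3)
   and P + c x + a_2 x^2 = P + q P - (1 + q) P.  Otherwise c = m p^e with m a
   unit and e <= k-2, and x = -p^(2k-2-e)/m satisfies x^2 = 0 and P + c x = 0. *)

Lemma horner_nilpotent (R : nzSemiRingType) (f : {poly R}) (x : R) (m : nat) :
  x ^+ m = 0 -> f.[x] = \sum_(i < m) f`_i * x ^+ i.
Proof.
move=> xm; rewrite (horner_coef_wide x (leq_maxr m (size f))).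
rewrite -(subnKC (leq_maxl m (size f))) big_split_ord /= [X in _ + X]big1 ?addr0 //.
by move=> i _; rewrite exprD xm mul0r mulr0.
Qed.

Lemma root_sqr0_coef (R : comNzRingType) (f : {poly R}) (e : R) :
  e ^+ 2 = 0 -> f`_0 = e -> f`_1 = 1 -> root f (- e).
Proof.
move=> e2 f0 f1; apply/eqP; rewrite (horner_nilpotent _ (m := 2)) ?sqrrN //.
by rewrite !big_ord_recl big_ord0 /= f0 f1; ring.
Qed.

Lemma cubic_nonvanishing (R : comNzRingType) (f : {poly R}) :
  (size f <= 4)%N -> f`_0 = 0 -> f`_3 = 1 -> 6%:R != 0 :> R ->
  exists x, f.[x] != 0.
Proof.
move=> sf f0 f3 six.
have hf x : f.[x] = f`_1 * x + f`_2 * x ^+ 2 + x ^+ 3.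
  by rewrite (horner_coef_wide x sf) !big_ord_recl big_ord0 /= f0 f3; ring.
have h6 : f.[2] - 3%:R * f.[1] - f.[-1] = 6%:R by rewrite !hf; ring.
have [f1|] := eqVneq f.[1] 0; last by exists 1.
have [fN1|] := eqVneq f.[-1] 0; last by exists (-1).
have [f2|] := eqVneq f.[2] 0; last by exists 2.
by move: six; rewrite -h6 f1 fN1 f2 mulr0 !subr0 eqxx.
Qed.

Lemma Zp_nat_eq0 (m n : nat) : (1 < m)%N -> ((n%:R : 'Z_m) == 0) = (m %| n)%N.
Proof. by move=> m_gt1; rewrite -val_eqE /= val_Zp_nat. Qed.

Section Game.
Variables N d : nat.
Implicit Types (s t : position N d) (i j : 'I_d.+1) (v : 'Z_N).

Definition free s := #|[pred i | s i == None]|.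

Definition extends t s := forall i v, s i = Some v -> t i = Some v.

Definition root_forced s := forall t, extends t s -> exists x, root (pos_poly t) x.

Definition open_ends s := ((s ord0 == None) + (s ord_max == None))%N.

Lemma play_same s i v : play s i v i = Some v.
Proof. by rewrite ffunE eqxx. Qed.

Lemma play_other s i j v : j != i -> play s i v j = s j.
Proof. by rewrite ffunE => /negbTE->. Qed.

Lemma free_empty : free (empty_pos N d) = d.+1.
Proof. by rewrite /free -[RHS]card_ord; apply: eq_card => i; rewrite !inE ffunE. Qed.

Lemma free_play s i v : s i = None -> free s = (free (play s i v)).+1.
Proof.
move=> si; rewrite /free (cardD1 i) inE si eqxx add1n; congr _.+1.
by apply: eq_card => j; rewrite !inE ffunE; case: eqP => [->|]; rewrite ?eqxx.
Qed.

Lemma exists_free s : (0 < free s)%N -> exists j, s j = None.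
Proof. by case/card_gt0P => j; rewrite inE => /eqP; exists j. Qed.

Lemma extends_play t s i v : s i = None -> extends t (play s i v) -> extends t s.
Proof.
move=> si ht j w sj; apply: ht; rewrite play_other //.
by apply: contra_eq_neq sj => ->; rewrite si.
Qed.

Lemma coef_pos_poly s j : (pos_poly s)`_j = odflt 0 (s j).
Proof. by rewrite coef_poly ltn_ord inord_val. Qed.

Lemma coef_extends t s (n : nat) v :
  extends t s -> s (inord n) = Some v -> (n <= d)%N -> (pos_poly t)`_n = v.
Proof. by move=> ht /ht tn nd; rewrite coef_poly ltnS nd tn. Qed.

Lemma pos_poly_empty : pos_poly (empty_pos N d) = 0.
Proof. by apply/polyP => n; rewrite coef_poly coef0 ffunE; case: ifP. Qed.

Lemma horner_play s j v x : s j = None ->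
  (pos_poly (play s j v)).[x] = (pos_poly s).[x] + v * x ^+ j.
Proof.
move=> sj; rewrite !horner_poly (bigD1 j) //= [in RHS](bigD1 j) //= !inord_val.
rewrite play_same sj mul0r add0r addrC; congr (_ + _).
by apply: eq_bigr => i ij; rewrite inord_val play_other.
Qed.

Lemma wwins_root_forced n b s : free s = n -> root_forced s -> wwins n b s.
Proof.
elim: n b s => [|n IH] b s fs hs /=; first exact: hs.
have free_play_n i v : s i = None -> free (play s i v) = n.
  by move=> si; move: fs; rewrite (free_play v si) => -[].
case: b.
  have [i si] : exists i, s i = None by apply: exists_free; rewrite fs.
  exists i, 1; split; first by split=> //; rewrite oner_eq0.
  by apply: IH (free_play_n _ _ si) _ => t /(extends_play si); apply: hs.
move=> i v [si _]; apply: IH (free_play_n _ _ si) _.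
by move=> t /(extends_play si); apply: hs.
Qed.

Lemma wwins_move_root_forced n s j v :
  free s = n.+1 -> legal_move s j v -> root_forced (play s j v) -> wwins n.+1 true s.
Proof.
move=> fs lm hr; exists j, v; split=> //; apply: wwins_root_forced hr.
by move: fs; rewrite (free_play v lm.1) => -[].
Qed.

Lemma wwins_last_move s j v x :
  legal_move s j v -> (pos_poly s).[x] + v * x ^+ j = 0 -> wwins 1 true s.
Proof.
by move=> lm hx; exists j, v; split=> //; exists x; rewrite /root horner_play ?hx ?lm.1.
Qed.

Lemma open_ends_play s i v : (open_ends (play s i v) <= open_ends s)%N.
Proof.
rewrite /open_ends !ffunE.
by case: (ord0 == i); case: (ord_max == i);
  case: (s ord0 == None); case: (s ord_max == None).
Qed.

Lemma open_ends_play_end s i v : s i = None -> (i == ord0) || (i == ord_max) ->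
  (open_ends (play s i v) < open_ends s)%N.
Proof.
move=> si /orP[]/eqP ei; rewrite /open_ends !ffunE -ei si eqxx /=;
  by case: (_ == i); case: (s _ == None).
Qed.

Lemma exists_move_closing_end s v : (0 < free s)%N ->
  exists2 j, s j = None & (open_ends (play s j v) <= (open_ends s).-1)%N.
Proof.
move=> fs; case s0: (s ord0) => [a|]; last first.
  by exists ord0 => //; rewrite -ltnS prednK ?open_ends_play_end ?eqxx // /open_ends s0.
case sm: (s ord_max) => [b|]; last first.
  exists ord_max => //.
  by rewrite -ltnS prednK ?open_ends_play_end ?eqxx ?orbT // /open_ends sm addn1.
have [j sj] := exists_free fs; exists j => //.
by rewrite (leq_trans (open_ends_play _ _ _)) // /open_ends s0 sm.
Qed.

Lemma legal_move_closed_ends s j v : open_ends s = 0%N -> s j = None -> legal_move s j v.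
Proof.
move=> e0 sj; split=> // /orP[]/eqP jv.
  by move: e0; rewrite /open_ends (_ : ord0 = j) ?sj //; apply: val_inj.
by move: e0; rewrite /open_ends (_ : ord_max = j) ?sj ?addn1 //; apply: val_inj.
Qed.

Lemma wwins_parity m s :
  free s = m.*2.+1 -> (open_ends s <= m)%N -> wwins m.*2.+1 true s.
Proof.
elim: m s => [|m IH] s fs es; have fs_gt0 : (0 < free s)%N by rewrite fs.
  have [j sj] := exists_free fs_gt0.
  apply: (@wwins_last_move s j (- (pos_poly s).[1]) 1).
    by apply: legal_move_closed_ends sj; apply/eqP; rewrite -leqn0.
  by rewrite expr1n mulr1 addrN.
have [j sj ej] := @exists_move_closing_end s 1 fs_gt0.
exists j, 1; split; first by split=> //; rewrite oner_eq0.
move=> i v [si _]; apply: IH.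
  by move: fs; rewrite doubleS (free_play 1 sj) (free_play v si) => -[].
by rewrite (leq_trans (open_ends_play _ _ _)) // (leq_trans ej) // -subn1 leq_subLR add1n.
Qed.
End Game.

Lemma wanda_first_deg1 N : wwins 2 true (empty_pos N 1).
Proof.
apply: (@wwins_move_root_forced _ _ 1 _ (inord 1) 1); first exact: free_empty.
  by split; [rewrite ffunE | rewrite oner_eq0].
move=> t ht; exists (- (pos_poly t)`_0); apply/eqP.
rewrite (horner_coef_wide _ (size_poly _ _)) !big_ord_recl big_ord0 /=.
by rewrite (coef_extends ht (play_same _ _ _)) //; ring.
Qed.

Lemma nora_first_deg1 N : wwins 2 false (empty_pos N 1).
Proof.
move=> i c [si ci] /=.
have c_neq0 : c != 0 by apply: ci; case: i {si} => [[|[|]]].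
have [j sj] : exists j, play (empty_pos N 1) i c j = None.
  by apply: exists_free; move: (free_empty N 1); rewrite (free_play c si) => -[->].
apply: (@wwins_last_move _ _ _ j (- c) 1); first by split=> // _; rewrite oppr_eq0.
by rewrite horner_play // pos_poly_empty horner0 !expr1n !mulr1 add0r addrN.
Qed.

Lemma nora_first_deg_ge5 N m : (2 <= m)%N -> wwins m.*2.+2 false (empty_pos N m.*2.+1).
Proof.
move=> m_ge2 i v [si _]; apply: wwins_parity.
  by move: (free_empty N m.*2.+1); rewrite (free_play v si) => -[].
rewrite (leq_trans (open_ends_play _ _ _)) // (leq_trans _ m_ge2) //.
exact: leq_add (leq_b1 _) (leq_b1 _).
Qed.

Lemma deg3_last_move N (s : position N 3) : 6%:R != 0 :> 'Z_N ->
  s ord0 = None -> s ord_max = Some 1 -> wwins 1 true s.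
Proof.
move=> six s0 s3.
have c0 : (pos_poly s)`_0 = 0 by rewrite (coef_pos_poly s ord0) s0.
have c3 : (pos_poly s)`_3 = 1 by rewrite (coef_pos_poly s ord_max) s3.
have [x fx] := cubic_nonvanishing (size_poly _ _) c0 c3 six.
apply: (@wwins_last_move _ _ s ord0 (- (pos_poly s).[x]) x).
  by split=> // _; rewrite oppr_eq0.
by rewrite expr0 mulr1 addrN.
Qed.

Lemma nora_first_deg3 N : 6%:R != 0 :> 'Z_N -> wwins 4 false (empty_pos N 3).
Proof.
move=> six i c [si _]; set s1 := play _ i c.
have fs1 : free s1 = 3%N by move: (free_empty N 3); rewrite (free_play c si) => -[].
have [i_end | i_mid] := boolP ((i == ord0) || (i == ord_max)).
  apply: (wwins_parity (m := 1)) => //.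
  by have := open_ends_play_end c si i_end; rewrite /open_ends !ffunE.
have [i0 im] : i != ord0 /\ i != ord_max by apply/norP.
have s1m : s1 ord_max = None by rewrite play_other 1?eq_sym // ffunE.
exists ord_max, 1; split; first by split=> // _; rewrite oner_eq0.
move=> j c' [sj _]; set s3 := play _ j c'.
have fs3 : free s3 = 1%N by move: fs1; rewrite (free_play 1 s1m) (free_play c' sj) => -[].
have jm : j != ord_max by apply: contra_eq_neq sj => ->; rewrite play_same.
have [j0 | j0] := eqVneq j ord0.
  apply: (wwins_parity (m := 0)) => //.
  by rewrite /open_ends /s3 j0 play_same play_other ?play_same.
apply: deg3_last_move six _ _; last by rewrite /s3 play_other 1?eq_sym // play_same.
by rewrite /s3 !play_other 1?eq_sym // ffunE.
Qed.

Section PrimePowerModulus.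
Variables p k : nat.
Hypotheses (p_pr : prime p) (k_ge3 : (3 <= k)%N).
Local Notation N := (p ^ (2 * k))%N.
Local Notation pexp n := ((p ^ n)%:R : 'Z_N).
Local Notation P := (pexp (2 * k - 2)).

Lemma N_gt1 : (1 < N)%N.
Proof. by rewrite -(expn0 p) ltn_exp2l ?prime_gt1 //; lia. Qed.

Lemma pexp_eq0 n : (pexp n == 0) = (2 * k <= n)%N.
Proof. by rewrite Zp_nat_eq0 ?N_gt1 // dvdn_Pexp2l ?prime_gt1. Qed.

Lemma P_sqr : P ^+ 2 = 0.
Proof. by apply/eqP; rewrite -natrX -expnM pexp_eq0; lia. Qed.

Lemma six_neq0 : 6%:R != 0 :> 'Z_N.
Proof.
rewrite Zp_nat_eq0 ?N_gt1 // gtnNdvd // (@leq_trans (2 ^ 6)) //.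
by rewrite (@leq_trans (p ^ 6)) ?leq_exp2r ?leq_exp2l ?prime_gt1 //; lia.
Qed.

Lemma exists_sqr0_solution (c : nat) : ~~ (p ^ (k - 1) %| c)%N ->
  exists x : 'Z_N, x ^+ 2 = 0 /\ P + c%:R * x = 0.
Proof.
move=> c_ndvd; have c_gt0 : (0 < c)%N by case: c c_ndvd; rewrite ?dvdn0.
have [m p_m c_eq] := pfactor_coprime p_pr c_gt0; set e := logn p c in c_eq.
have e_lt : (e < k - 1)%N by rewrite ltnNge -pfactor_dvdn.
have [u um] : exists u, u * m%:R = 1 :> 'Z_N.
  exists (m%:R)^-1; apply: mulVr.
  by rewrite unitZpE ?N_gt1 // coprimeXl.
exists (- pexp (2 * k - 2 - e) * u); split.
  rewrite exprMn sqrrN -natrX -expnM.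
  have -> : pexp ((2 * k - 2 - e) * 2) = 0 by apply/eqP; rewrite pexp_eq0; lia.
  by rewrite mul0r.
rewrite c_eq natrM.
have -> : m%:R * pexp e * (- pexp (2 * k - 2 - e) * u) =
          - (pexp e * pexp (2 * k - 2 - e)) * (u * m%:R) by ring.
by rewrite um mulr1 -natrM -expnD subnKC ?subrr //; lia.
Qed.

Definition a2_reply (c : 'Z_N) : 'Z_N := -1 - ((c : nat) %/ p ^ (k - 1))%:R.

Lemma a2_reply_root (f : {poly 'Z_N}) (c : 'Z_N) :
  f`_0 = P -> f`_1 = c -> f`_2 = a2_reply c -> exists x, root f x.
Proof.
move=> f0 f1 f2; have [c_dvd | c_ndvd] := boolP (p ^ (k - 1) %| c)%N; last first.
  have [x [x2 hx]] := exists_sqr0_solution c_ndvd; exists x; apply/eqP.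
  rewrite (horner_nilpotent _ (m := 2)) // !big_ord_recl big_ord0 /= f0 f1.
  by rewrite natr_Zp in hx; rewrite expr0 mulr1 expr1 addr0.
exists (pexp (k - 1)); apply/eqP.
rewrite (horner_nilpotent _ (m := 3)); last first.
  by apply/eqP; rewrite -natrX -expnM pexp_eq0; lia.
rewrite !big_ord_recl big_ord0 /= f0 f1 f2 /a2_reply.
set q := ((c : nat) %/ _)%:R.
have c_eq : c = q * pexp (k - 1) by rewrite -natrM divnK // natr_Zp.
have P_eq : P = pexp (k - 1) ^+ 2 by rewrite -natrX -expnM; congr (p ^ _)%:R; lia.
by rewrite P_eq {1}c_eq; ring.
Qed.

Lemma wanda_first_deg_ge3 d : (3 <= d)%N -> wwins d.+1 true (empty_pos N d).
Proof.
case: d => [|[|[|d]]] // _.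
have inord_neq n1 n2 : (n1 <= d.+3)%N -> (n2 <= d.+3)%N -> n1 != n2 ->
    (inord n1 : 'I_d.+4) != inord n2.
  by move=> ? ? ?; rewrite -val_eqE /= !inordK.
have P_neq0 : P != 0 by rewrite pexp_eq0; lia.
exists (inord 0), P; split; first by split=> //; rewrite ffunE.
move=> i c [si _]; set s1 := play _ _ P in si *; set s2 := play s1 i c.
have fs2 : free s2 = d.+2.
  have e0 : empty_pos N d.+3 (inord 0) = None by rewrite ffunE.
  by move: (free_empty N d.+3); rewrite (free_play P e0) (free_play c si) => -[].
have s2_0 : s2 (inord 0) = Some P.
  by rewrite play_other ?play_same //; apply: contra_eq_neq si => <-; rewrite play_same.
have [i1 | i1] := eqVneq i (inord 1).
  have s2_2 : s2 (inord 2) = None by rewrite !play_other ?ffunE ?i1 ?inord_neq.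
  have legal2 : legal_move s2 (inord 2) (a2_reply c) by split=> //; rewrite inordK.
  apply: (wwins_move_root_forced fs2 legal2) => t ht.
  have ht2 := extends_play s2_2 ht.
  apply: (@a2_reply_root _ c).
  - by apply: (coef_extends ht2 s2_0).
  - by apply: (coef_extends ht2 (_ : s2 (inord 1) = Some c)) => //; rewrite -i1 play_same.
  - by apply: (coef_extends ht (play_same _ _ _)).
have s2_1 : s2 (inord 1) = None.
  by rewrite play_other 1?eq_sym // play_other ?ffunE ?inord_neq.
have legal1 : legal_move s2 (inord 1) 1 by split=> // _; rewrite oner_eq0.
apply: (wwins_move_root_forced fs2 legal1) => t ht.
exists (- P); apply: (root_sqr0_coef (f := pos_poly t) P_sqr).
- by apply: (coef_extends (extends_play s2_1 ht) s2_0).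
- by apply: (coef_extends ht (play_same _ _ _)).
Qed.

End PrimePowerModulus.

Local Close Scope ring_scope.

Theorem lemma7 (p k d : nat) :
  prime p -> (3 <= k)%N -> odd d ->
  forall wanda_first : bool, wanda_wins (p ^ (2 * k)) d wanda_first.
Proof.
move=> p_pr k_ge3 d_odd b; rewrite /wanda_wins.
have [m ->] : exists m, d = m.*2.+1 by exists d./2; rewrite -[LHS]odd_double_half d_odd.
case: b; case: m => [|[|m]].
- exact: wanda_first_deg1.
- exact: wanda_first_deg_ge3.
- by apply: wanda_first_deg_ge3.
- exact: nora_first_deg1.
- exact: nora_first_deg3 (six_neq0 p_pr k_ge3).
- exact: nora_first_deg_ge5.
Qed.
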